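(* Let $T\ge2$ be an integer and $\gamma\in\mathbb{R}$. Let $\{\hat c^n_t: n\ge1,\ 1\le t\le T-1\}$ be independent, identically distributed real random variables with mean $c$ and variance $\sigma^2<\infty$. Let $\alpha_{n-1,t}$ ($n\ge1$, $1\le t\le T-1$) be deterministic real numbers. Set $\bar v^0_t=0$ for $1\le t\le T-1$ and $\bar v^n_T=0$ for all $n\ge0$, and for $n\ge1$, $1\le t\le T-1$, $$\hat v^n_t=\hat c^n_t+\gamma\bar v^{n-1}_{t+1},\qquad \bar v^n_t=(1-\alpha_{n-1,t})\bar v^{n-1}_t+\alpha_{n-1,t}\hat v^n_t.$$ For $1\le t,t'\le T-1$ define $\delta^1_t=\alpha_{0,t}$, $\lambda^1_{t,t'}=\alpha_{0,t}^2\mathbf 1_{\{t=t'\}}$, and for $n>1$, $$\delta^n_t=(1+\gamma\delta^{n-1}_{t+1})\alpha_{n-1,t}+(1-\alpha_{n-1,t})\delta^{n-1}_t,$$ $$\lambda^n_{t,t'}=\alpha_{n-1,t}^2\mathbf 1_{\{t=t'\}}+J^{n-1}_{t,t'}+K^{n-1}_{t,t'}+L^{n-1}_{t,t'}+M^{n-1}_{t,t'},$$ where $J^{n-1}_{t,t'}=(1-\alpha_{n-1,t})(1-\alpha_{n-1,t'})\lambda^{n-1}_{t,t'}$, $K^{n-1}_{t,t'}=\gamma(1-\alpha_{n-1,t})\alpha_{n-1,t'}\lambda^{n-1}_{t,t'+1}$, $L^{n-1}_{t,t'}=\gamma\alpha_{n-1,t}(1-\alpha_{n-1,t'})\lambda^{n-1}_{t+1,t'}$,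 $M^{n-1}_{t,t'}=\gamma^2\alpha_{n-1,t}\alpha_{n-1,t'}\lambda^{n-1}_{t+1,t'+1}$, with the conventions $\delta^m_T=0$ and $\lambda^m_{t,T}=\lambda^m_{T,t'}=0$ for all $m$. Then for all $n\ge1$ and $1\le t,t'\le T-1$, $\mathbb{E}(\bar v^n_t)=\delta^n_tc$ and $\mathrm{Cov}(\bar v^n_t,\bar v^n_{t'})=\lambda^n_{t,t'}\sigma^2$.
   Context: This is a finite-horizon (horizon $T$) version of approximate value iteration for a single-state, single-action problem, where at each iteration $n$ the updates are performed for all $t=1,\dots,T-1$, and the terminal value is $0$. *)

From HB Require Import structures.
From mathcomp Require Import all_boot all_order all_algebra.
From mathcomp Require Import all_classical all_reals all_analysis.
Set Implicit Arguments. Unset Strict Implicit. Unset Printing Implicit Defensive.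
Import Order.TTheory GRing.Theory Num.Theory.
Local Open Scope classical_set_scope.
Local Open Scope ring_scope.

Definition mutually_independent d (Om : measurableType d) (R : realType)
  (P : probability Om R) (I : eqType) (D : set I) (X : I -> {RV P >-> R}) :=
  forall (s : seq I) (B : I -> set R),
    uniq s -> (forall i, i \in s -> D i) -> (forall i, measurable (B i)) ->
    P (\big[setI/setT]_(i <- s) (X i @^-1` B i)) =
    (\prod_(i <- s) P (X i @^-1` B i))%E.

Definition identically_distributed d (Om : measurableType d) (R : realType)
  (P : probability Om R) (I : Type) (D : set I) (X : I -> {RV P >-> R}) :=
  forall i j, D i -> D j -> distribution P (X i) = distribution P (X j).

Definition in_range (T t : nat) : bool := (1 <= t)%N && (t <= T - 1)%N.

Fixpoint vbar d (Om : measurableType d) (R : realType) (T : nat) (gamma : R)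
  (alpha : nat -> nat -> R) (chat : nat -> nat -> Om -> R) (n t : nat)
  : Om -> R :=
  match n with
  | 0 => fun _ => 0
  | m.+1 => fun w =>
      if in_range T t then
        (1 - alpha m t) * vbar T gamma alpha chat m t w
        + alpha m t * (chat m.+1 t w + gamma * vbar T gamma alpha chat m t.+1 w)
      else 0
  end.

Definition vhat d (Om : measurableType d) (R : realType) (T : nat) (gamma : R)
  (alpha : nat -> nat -> R) (chat : nat -> nat -> Om -> R) (n t : nat)
  : Om -> R :=
  fun w => chat n t w + gamma * vbar T gamma alpha chat n.-1 t.+1 w.

Fixpoint delta (R : realType) (T : nat) (gamma : R) (alpha : nat -> nat -> R)
  (n t : nat) : R :=
  match n with
  | 0 => 0 (* unused *)
  | 1 => if in_range T t then alpha 0%N t else 0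
  | (m.+1) as k =>
      if in_range T t then
        (1 + gamma * delta T gamma alpha m t.+1) * alpha m t
        + (1 - alpha m t) * delta T gamma alpha m t
      else 0
  end.

Fixpoint lambda (R : realType) (T : nat) (gamma : R) (alpha : nat -> nat -> R)
  (n t t' : nat) : R :=
  match n with
  | 0 => 0 (* unused *)
  | 1 => if in_range T t && in_range T t' then
           alpha 0%N t ^+ 2 * (t == t')%:R else 0
  | (m.+1) as k =>
      if in_range T t && in_range T t' then
        alpha m t ^+ 2 * (t == t')%:R
        + (1 - alpha m t) * (1 - alpha m t') * lambda T gamma alpha m t t'
        + gamma * (1 - alpha m t) * alpha m t' * lambda T gamma alpha m t t'.+1
        + gamma * alpha m t * (1 - alpha m t') * lambda T gamma alpha m t.+1 t'
        + gamma ^+ 2 * alpha m t * alpha m t' * lambda T gamma alpha m t.+1 t'.+1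
      else 0
  end.

From HB Require Import structures.
From mathcomp Require Import all_boot all_order all_algebra.
From mathcomp Require Import all_classical all_reals all_analysis.
From mathcomp Require Import measurable_realfun ring.
Import Order.TTheory GRing.Theory Num.Theory.
Local Open Scope classical_set_scope.
Local Open Scope ring_scope.

(* The iterates are affine in the noise: v^(n+1)_t is a fixed linear
   combination of v^n_t, chat^(n+1)_t and v^n_(t+1), so expectations and
   covariances propagate through the recursion by bilinearity, which is exactly
   the recursion defining delta and lambda.  The one extra ingredient, carried
   along the induction, is that fresh noise chat^m_s (m > n) is uncorrelated with
   every v^n_t; for single noise terms this comes from pairwise independence,
   which gives E[XY] = E[X] E[Y] by Fubini on the product of the two
   distributions. *)

Section square_integrable_combinations.
Local Open Scope ereal_scope.
Context {R : realType} {d : measure_display} {Om : measurableType d}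
  {P : probability Om R}.

Lemma Lfun2_Lfun1 {X : Om -> R} : X \in Lfun P 2%:E -> X \in Lfun P 1.
Proof. exact/Lfun_subset12/fin_num_measure. Qed.

Lemma Lfun2D (X Y : Om -> R) :
  X \in Lfun P 2%:E -> Y \in Lfun P 2%:E -> (X \+ Y)%R \in Lfun P 2%:E.
Proof. exact: (@Lfun_addr_closed _ _ _ P 2%:E ltac:(by rewrite lee_fin ler1n)).2. Qed.

Lemma Lfun2Z (X : Om -> R) a : X \in Lfun P 2%:E -> (a \o* X)%R \in Lfun P 2%:E.
Proof. by move=> X2; apply: Lfun_scale; rewrite ?ler1n. Qed.

Lemma Lfun2_comb3 {X1 X2 X3 : Om -> R} {b1 b2 b3 : R} :
  X1 \in Lfun P 2%:E -> X2 \in Lfun P 2%:E -> X3 \in Lfun P 2%:E ->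
  (b1 \o* X1 \+ b2 \o* X2 \+ b3 \o* X3)%R \in Lfun P 2%:E.
Proof. by move=> *; rewrite !(Lfun2D, Lfun2Z). Qed.

Lemma expectation_comb3 {X1 X2 X3 : Om -> R} {b1 b2 b3 e1 e2 e3 : R} :
  X1 \in Lfun P 2%:E -> X2 \in Lfun P 2%:E -> X3 \in Lfun P 2%:E ->
  'E_P[X1] = e1%:E -> 'E_P[X2] = e2%:E -> 'E_P[X3] = e3%:E ->
  'E_P[(b1 \o* X1 \+ b2 \o* X2 \+ b3 \o* X3)%R] = (b1 * e1 + b2 * e2 + b3 * e3)%:E.
Proof.
move=> h1 h2 h3 E1 E2 E3.
rewrite !expectationD ?Lfun2_Lfun1 ?Lfun2D ?Lfun2Z//.
by rewrite !expectationZl ?Lfun2_Lfun1// E1 E2 E3 -!EFinM -!EFinD.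
Qed.

Lemma covariance_comb3r {X Y1 Y2 Y3 : Om -> R} {b1 b2 b3 c1 c2 c3 : R} :
  X \in Lfun P 2%:E -> Y1 \in Lfun P 2%:E -> Y2 \in Lfun P 2%:E -> Y3 \in Lfun P 2%:E ->
  covariance P X Y1 = c1%:E -> covariance P X Y2 = c2%:E -> covariance P X Y3 = c3%:E ->
  covariance P X (b1 \o* Y1 \+ b2 \o* Y2 \+ b3 \o* Y3)%R = (b1 * c1 + b2 * c2 + b3 * c3)%:E.
Proof.
move=> hX h1 h2 h3 C1 C2 C3.
rewrite !covarianceDr ?Lfun2D ?Lfun2Z//.
by rewrite !covarianceZr ?Lfun2_mul_Lfun1 ?Lfun2_Lfun1// C1 C2 C3 -!EFinM -!EFinD.
Qed.

Lemma covariance_comb3l {Y X1 X2 X3 : Om -> R} {b1 b2 b3 c1 c2 c3 : R} :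
  Y \in Lfun P 2%:E -> X1 \in Lfun P 2%:E -> X2 \in Lfun P 2%:E -> X3 \in Lfun P 2%:E ->
  covariance P X1 Y = c1%:E -> covariance P X2 Y = c2%:E -> covariance P X3 Y = c3%:E ->
  covariance P (b1 \o* X1 \+ b2 \o* X2 \+ b3 \o* X3)%R Y = (b1 * c1 + b2 * c2 + b3 * c3)%:E.
Proof.
move=> hY h1 h2 h3 C1 C2 C3.
by rewrite covarianceC; apply: covariance_comb3r => //; rewrite covarianceC.
Qed.

End square_integrable_combinations.

Section pair_independence.
Local Open Scope ereal_scope.
Context {R : realType} {d : measure_display} {Om : measurableType d}
  {P : probability Om R}.

Definition pair_independent (X Y : {RV P >-> R}) :=
  forall A B, measurable A -> measurable B ->
    P (X @^-1` A `&` Y @^-1` B) = P (X @^-1` A) * P (Y @^-1` B).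

Lemma expectation_distribution (X : {RV P >-> R}) : (X : Om -> R) \in Lfun P 1 ->
  'E_P[X] = (\int[distribution P X]_x x%:E).
Proof.
move=> X1; have mid : measurable_fun [set: R] (fun x : R => x%:E).
  exact/measurable_EFinP.
rewrite (integral_pushforward (measurable_funP X) mid) ?preimage_setT//.
  by rewrite unlock.
exact/Lfun1_integrable.
Qed.

Lemma distribution_integrable (X : {RV P >-> R}) : (X : Om -> R) \in Lfun P 1 ->
  (distribution P X).-integrable setT (fun x : R => x%:E).
Proof.
move=> X1; apply: (integrable_pushforward (measurable_funP X)) => //.
  exact/measurable_EFinP.
by rewrite preimage_setT; exact/Lfun1_integrable.
Qed.

Lemma pair_independent_distribution (X Y : {RV P >-> R}) : pair_independent X Y ->
  forall A, measurable A ->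
    (distribution P X \x distribution P Y) A =
    pushforward P (fun w => (X w, Y w)) A.
Proof.
move=> XY A mA; have mZ : measurable_fun setT (fun w => (X w, Y w)).
  exact: measurable_fun_pair (measurable_funP X) (measurable_funP Y).
apply: (product_measure_unique _ mA) => A1 A2 mA1 mA2; first exact: XY.
Qed.

Lemma expectationM_pair_independent (X Y : {RV P >-> R}) : pair_independent X Y ->
  (X : Om -> R) \in Lfun P 2%:E -> (Y : Om -> R) \in Lfun P 2%:E ->
  'E_P[(X * Y)%R] = 'E_P[X] * 'E_P[Y].
Proof.
move=> XY X2 Y2.
have X1 := Lfun2_Lfun1 X2; have Y1 := Lfun2_Lfun1 Y2.
pose Z w := (X w, Y w); pose f (z : R * R) := (z.1 * z.2)%:E.
have mZ : measurable_fun setT Z.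
  exact: measurable_fun_pair (measurable_funP X) (measurable_funP Y).
have mf : measurable_fun setT f by apply/measurable_EFinP; exact: measurable_funM.
have muE := pair_independent_distribution _ _ XY.
have intZ : P.-integrable (Z @^-1` setT) (f \o Z).
  by rewrite preimage_setT; exact/Lfun1_integrable/Lfun2_mul_Lfun1.
have intf : (distribution P X \x distribution P Y).-integrable setT f.
  apply/integrableP; split => //; rewrite (eq_measure_integral _ (fun A mA _ => muE A mA)).
  by case/integrableP: (integrable_pushforward mZ mf intZ measurableT).
have EXY : 'E_P[(X * Y)%R] = (\int[distribution P X \x distribution P Y]_z f z).
  rewrite (eq_measure_integral _ (fun A mA _ => muE A mA)).
  by rewrite (integral_pushforward mZ mf) ?preimage_setT// unlock.
have EYfin : (\int[distribution P Y]_y y%:E) \is a fin_num.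
  by rewrite -expectation_distribution// expectation_fin_num.
rewrite EXY -(integral12_prod_meas1 intf) /fubini_F.
under eq_integral => x _.
  under eq_integral => y _ do rewrite /f EFinM.
  rewrite integralZl ?distribution_integrable// -(fineK EYfin).
  over.
rewrite /= integralZr ?distribution_integrable// fineK//.
by rewrite !expectation_distribution.
Qed.

Lemma covariance_pair_independent (X Y : {RV P >-> R}) : pair_independent X Y ->
  (X : Om -> R) \in Lfun P 2%:E -> (Y : Om -> R) \in Lfun P 2%:E ->
  covariance P X Y = 0.
Proof.
move=> XY X2 Y2.
have X1 := Lfun2_Lfun1 X2; have Y1 := Lfun2_Lfun1 Y2.
rewrite covarianceE ?Lfun2_mul_Lfun1// expectationM_pair_independent//.
by rewrite subee// fin_numM// expectation_fin_num.
Qed.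

End pair_independence.

Lemma deltaS (R : realType) (T : nat) (gamma : R) (alpha : nat -> nat -> R) n t :
  delta T gamma alpha n.+1 t = if in_range T t then
    (1 + gamma * delta T gamma alpha n t.+1) * alpha n t
    + (1 - alpha n t) * delta T gamma alpha n t else 0.
Proof. by case: n => [|n] /=; case: ifP => // _; ring. Qed.

Lemma lambdaS (R : realType) (T : nat) (gamma : R) (alpha : nat -> nat -> R) n t t' :
  lambda T gamma alpha n.+1 t t' = if in_range T t && in_range T t' then
    alpha n t ^+ 2 * (t == t')%:R
    + (1 - alpha n t) * (1 - alpha n t') * lambda T gamma alpha n t t'
    + gamma * (1 - alpha n t) * alpha n t' * lambda T gamma alpha n t t'.+1
    + gamma * alpha n t * (1 - alpha n t') * lambda T gamma alpha n t.+1 t'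
    + gamma ^+ 2 * alpha n t * alpha n t' * lambda T gamma alpha n t.+1 t'.+1
  else 0.
Proof. by case: n => [|n] /=; case: ifP => // _; ring. Qed.

Lemma vbarS (R : realType) (d : measure_display) (Om : measurableType d) (T : nat)
    (gamma : R) (alpha : nat -> nat -> R) (chat : nat -> nat -> Om -> R) n t :
  vbar T gamma alpha chat n.+1 t = if in_range T t then
    ((1 - alpha n t) \o* vbar T gamma alpha chat n t \+ alpha n t \o* chat n.+1 t
     \+ (alpha n t * gamma) \o* vbar T gamma alpha chat n t.+1)%R
  else cst 0.
Proof. by apply/funext => w /=; case: ifP => //= _; ring. Qed.

Section vbar_moments.
Context (R : realType) (d : measure_display) (Om : measurableType d)
  (P : probability Om R) (T : nat) (gamma c sigma2 : R)
  (alpha : nat -> nat -> R) (chat : nat -> nat -> {RV P >-> R}).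
Hypothesis chat_independent : mutually_independent
  [set nt : nat * nat | (1 <= nt.1)%N /\ in_range T nt.2] (fun nt => chat nt.1 nt.2).
Hypothesis chat_moments : forall n t, (1 <= n)%N -> in_range T t ->
  (chat n t : Om -> R) \in Lfun P 2%:E /\
  ('E_P[chat n t] = c%:E)%E /\ variance P (chat n t) = sigma2%:E.

Local Notation V n t := (vbar T gamma alpha (fun m s => (chat m s : Om -> R)) n t).

Lemma chat_pair_independent n t m s :
  (1 <= n)%N -> in_range T t -> (1 <= m)%N -> in_range T s -> (n, t) != (m, s) ->
  pair_independent (chat n t) (chat m s).
Proof.
move=> n1 t_in m1 s_in nt_ms A B mA mB.
have := chat_independent [:: (n, t); (m, s)] (fun k => if k == (n, t) then A else B).
rewrite !big_cons !big_nil /= setIT mule1 eqxx eq_sym (negbTE nt_ms); apply.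
- by rewrite /= inE andbT.
- by move=> k; rewrite !inE => /orP[] /eqP ->.
- by move=> k; case: ifP.
Qed.

Lemma covariance_chat n t m s :
  (1 <= n)%N -> in_range T t -> (1 <= m)%N -> in_range T s ->
  covariance P (chat n t) (chat m s) = (((n, t) == (m, s))%:R * sigma2)%:E.
Proof.
move=> n1 t_in m1 s_in; have [chat2 [_ var_chat]] := chat_moments _ _ n1 t_in.
case: eqP => [[<- <-]|/eqP nt_ms]; first by rewrite mul1r.
rewrite mul0r covariance_pair_independent//; first exact: chat_pair_independent.
by case: (chat_moments _ _ m1 s_in).
Qed.

Definition vbar_moments n := [/\ forall t, V n t \in Lfun P 2%:E,
  forall t, ('E_P[V n t] = (delta T gamma alpha n t * c)%:E)%E,
  forall t t', covariance P (V n t) (V n t') = (lambda T gamma alpha n t t' * sigma2)%:E &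
  forall m s t, (n < m)%N -> in_range T s -> covariance P (chat m s) (V n t) = 0%:E].

Lemma vbar_moments0 : vbar_moments 0.
Proof.
have V0 t : V 0 t = cst 0 by [].
split=> [t|t|t t'|m s t _ _]; rewrite ?V0.
- exact: Lfun_cst.
- by rewrite expectation_cst mul0r.
- by rewrite covariance_cst_l mul0r.
- by rewrite covariance_cst_r.
Qed.

Section step.
Variable n : nat.
Hypotheses (V2 : forall t, V n t \in Lfun P 2%:E)
  (EV : forall t, ('E_P[V n t] = (delta T gamma alpha n t * c)%:E)%E)
  (covV : forall t t', covariance P (V n t) (V n t') =
                       (lambda T gamma alpha n t t' * sigma2)%:E)
  (cov_chatV : forall m s t, (n < m)%N -> in_range T s ->
                             covariance P (chat m s) (V n t) = 0%:E).

Let chat2 {t} : in_range T t -> (chat n.+1 t : Om -> R) \in Lfun P 2%:E.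
Proof. by move=> t_in; case: (chat_moments _ _ (ltn0Sn n) t_in). Qed.

Lemma vbarS_Lfun2 t : V n.+1 t \in Lfun P 2%:E.
Proof.
rewrite vbarS; case: ifP => t_in; last exact: Lfun_cst.
by apply: Lfun2_comb3 => //; exact: chat2.
Qed.

Lemma expectation_vbarS t :
  ('E_P[V n.+1 t] = (delta T gamma alpha n.+1 t * c)%:E)%E.
Proof.
rewrite vbarS deltaS; case: ifP => t_in; last by rewrite expectation_cst mul0r.
have [_ [Echat _]] := chat_moments _ _ (ltn0Sn n) t_in.
rewrite (expectation_comb3 (V2 t) (chat2 t_in) (V2 t.+1) (EV t) Echat (EV t.+1)).
by congr EFin; ring.
Qed.

Lemma covariance_chat_vbarS m s t : (n.+1 < m)%N -> in_range T s ->
  covariance P (chat m s) (V n.+1 t) = 0%:E.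
Proof.
move=> lt_nm s_in; rewrite vbarS; case: ifP => t_in; last exact: covariance_cst_r.
have m1 : (1 <= m)%N by apply: leq_trans lt_nm.
have [chat2_m _] := chat_moments _ _ m1 s_in.
have cov_chat : covariance P (chat m s) (chat n.+1 t) = 0%:E.
  rewrite covariance_chat//; case: eqP => [[m_eq _]|_]; last by rewrite mul0r.
  by move: lt_nm; rewrite m_eq ltnn.
rewrite (covariance_comb3r chat2_m (V2 t) (chat2 t_in) (V2 t.+1)
  (cov_chatV _ _ t (ltnW lt_nm) s_in) cov_chat (cov_chatV _ _ t.+1 (ltnW lt_nm) s_in)).
by congr EFin; ring.
Qed.

Lemma covariance_vbarS t t' :
  covariance P (V n.+1 t) (V n.+1 t') = (lambda T gamma alpha n.+1 t t' * sigma2)%:E.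
Proof.
rewrite lambdaS.
case: (boolP (in_range T t)) => t_in; last first.
  by rewrite vbarS (negbTE t_in) covariance_cst_l mul0r.
case: (boolP (in_range T t')) => t'_in; last first.
  by rewrite [V n.+1 t']vbarS (negbTE t'_in) covariance_cst_r andbF mul0r.
have cov_vbarS_t' X a b e : X \in Lfun P 2%:E ->
    covariance P X (V n t') = a%:E -> covariance P X (chat n.+1 t') = b%:E ->
    covariance P X (V n t'.+1) = e%:E ->
  covariance P X (V n.+1 t') =
    ((1 - alpha n t') * a + alpha n t' * b + alpha n t' * gamma * e)%:E.
  move=> X2 Ca Cb Ce; rewrite vbarS t'_in.
  exact: (covariance_comb3r X2 (V2 t') (chat2 t'_in) (V2 t'.+1)).
have cov_Vchat u : covariance P (V n u) (chat n.+1 t') = 0%:E.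
  by rewrite covarianceC cov_chatV.
have cov_chat_chat : covariance P (chat n.+1 t) (chat n.+1 t') =
    ((t == t')%:R * sigma2)%:E.
  by rewrite covariance_chat// xpair_eqE eqxx.
rewrite vbarS t_in /= (covariance_comb3l (vbarS_Lfun2 t')
  (V2 t) (chat2 t_in) (V2 t.+1)
  (cov_vbarS_t' _ _ _ _ (V2 t) (covV t t') (cov_Vchat t) (covV t t'.+1))
  (cov_vbarS_t' _ _ _ _ (chat2 t_in) (cov_chatV _ _ t' (ltnSn n) t_in) cov_chat_chat
     (cov_chatV _ _ t'.+1 (ltnSn n) t_in))
  (cov_vbarS_t' _ _ _ _ (V2 t.+1) (covV t.+1 t') (cov_Vchat t.+1) (covV t.+1 t'.+1))).
by congr EFin; case: eqP => [<-|_]; rewrite ?mulr0n ?mulr1n; ring.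
Qed.

End step.

Lemma vbar_momentsS n : vbar_moments n -> vbar_moments n.+1.
Proof.
case=> V2 EV covV cov_chatV; split.
- exact: vbarS_Lfun2.
- exact: expectation_vbarS.
- exact: covariance_vbarS.
- exact: covariance_chat_vbarS.
Qed.

Lemma vbar_momentsP n : vbar_moments n.
Proof. by elim: n => [|n]; [exact: vbar_moments0 | exact: vbar_momentsS]. Qed.

End vbar_moments.

Theorem proposition6 (R : realType) (d : measure_display) (Om : measurableType d)
  (P : probability Om R) (T : nat) (gamma c sigma2 : R)
  (alpha : nat -> nat -> R) (chat : nat -> nat -> {RV P >-> R}) :
  (2 <= T)%N ->
  mutually_independent
    [set nt : nat * nat | (1 <= nt.1)%N /\ in_range T nt.2]
    (fun nt => chat nt.1 nt.2) ->
  identically_distributed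
    [set nt : nat * nat | (1 <= nt.1)%N /\ in_range T nt.2]
    (fun nt => chat nt.1 nt.2) ->
  (forall n t, (1 <= n)%N -> in_range T t ->
     (chat n t : Om -> R) \in Lfun P 2%:E /\
     ('E_P[chat n t] = c%:E)%E /\ variance P (chat n t) = sigma2%:E) ->
  forall n t t', (1 <= n)%N -> in_range T t -> in_range T t' ->
    ('E_P[vbar T gamma alpha (fun m s => (chat m s : Om -> R)) n t]
      = (delta T gamma alpha n t * c)%:E)%E /\
    covariance P (vbar T gamma alpha (fun m s => (chat m s : Om -> R)) n t)
                 (vbar T gamma alpha (fun m s => (chat m s : Om -> R)) n t')
      = (lambda T gamma alpha n t t' * sigma2)%:E.
Proof.
move=> _ chat_independent _ chat_moments n t t' _ _ _.
have [_ E C _] :=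
  @vbar_momentsP R d Om P T gamma c sigma2 alpha chat chat_independent chat_moments n.
by split; [exact: E | exact: C].
Qed.
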